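(* Let $V=[0,1]$ and let $\{M_f(\cdot;\rho)\}_{\rho\in[0,1]}$ be a family of nonnegative distributions on $V$ with $\int_V M_f(v;\rho)\,dv=\rho$, differentiable with respect to $\rho$. Define $Q_{\mathrm{eq}}(\rho)=\int_V v\,M_f(v;\rho)\,dv$, $U_{\mathrm{eq}}(\rho)=\frac{1}{\rho}Q_{\mathrm{eq}}(\rho)$, \[ \mathrm{Var}(v)(\rho)=\int_V \big(v-U_{\mathrm{eq}}(\rho)\big)^2 M_f(v;\rho)\,dv, \qquad \mu(\rho)=\int_V v^2\,\partial_\rho M_f(v;\rho)\,dv-\big(Q_{\mathrm{eq}}'(\rho)\big)^2 . \] Assume there exists $\widetilde{\rho}\in(0,1)$ such that for all $\rho\in(\widetilde{\rho},1)$ \[ Q_{\mathrm{eq}}'(\rho)=\int_V v\,\partial_\rho M_f(v;\rho)\,dv<0 \quad\text{and}\quad \partial_\rho\,\mathrm{Var}(v)(\rho)<0 . \] Then $\mu(\rho)<0$ for all $\rho\in(\widetilde{\rho},1)$.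
   Context: Here $M_f(v;\rho)$ models the equilibrium distribution of microscopic vehicle speeds $v\in[0,1]$ (dimensionless, maximum speed $1$) at density $\rho\in[0,1]$ (dimensionless, maximum density $1$); $\mu(\rho)$ is the diffusion coefficient arising from the first-order Chapman–Enskog expansion of the BGK model $\partial_t f+v\partial_x f=\frac1\epsilon(M_f(v;\rho)-f)$. *)

From Stdlib Require Import Reals.
From Coquelicot Require Import Coquelicot.
Open Scope R_scope.

Definition dM (M : R -> R -> R) (v rho : R) : R := Derive (fun r => M v r) rho.

Definition Qeq (M : R -> R -> R) (rho : R) : R := RInt (fun v => v * M v rho) 0 1.

Definition Ueq (M : R -> R -> R) (rho : R) : R := Qeq M rho / rho.

Definition Varv (M : R -> R -> R) (rho : R) : R :=
  RInt (fun v => (v - Ueq M rho) ^ 2 * M v rho) 0 1.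

Definition mu (M : R -> R -> R) (rho : R) : R :=
  RInt (fun v => v ^ 2 * dM M v rho) 0 1 - (Derive (Qeq M) rho) ^ 2.

(* The variance is a combination of moments, Var = ∫ v² M − Q_eq² / ρ, so
   differentiating under the integral sign gives
   Var' = ∫ v² ∂_ρ M − (2 Q_eq' Q_eq ρ − Q_eq²) / ρ², and completing the square,
   μ = Var' − (Q_eq' − U_eq)² ≤ Var' < 0. *)
From Stdlib Require Import Reals Lra.
From Coquelicot Require Import Coquelicot.
Open Scope R_scope.

Lemma continuity_2d_pt_swap (f : R -> R -> R) x y :
  continuity_2d_pt f x y -> continuity_2d_pt (fun u v => f v u) y x.
Proof.
  intros H eps. destruct (H eps) as [d Hd].
  exists d. intros u v Hu Hv. now apply Hd.
Qed.

Lemma continuity_2d_pt_continuous_l (f : R -> R -> R) x y :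
  continuity_2d_pt f x y -> continuous (fun t => f t y) x.
Proof.
  intros H. apply filterlim_locally. intros eps. destruct (H eps) as [d Hd].
  exists d. intros z Hz. apply Hd.
  - exact Hz.
  - rewrite Rminus_eq_0, Rabs_R0. apply cond_pos.
Qed.

Lemma locally_open_unit_interval r : 0 < r < 1 -> locally r (fun x => 0 < x < 1).
Proof.
  intros Hr.
  apply (locally_interval _ r (Finite 0) (Finite 1)); simpl; [lra | lra | intros; lra].
Qed.

Definition moment (M : R -> R -> R) (w : R -> R) (rho : R) : R :=
  RInt (fun v => w v * M v rho) 0 1.

Section Moments.

Variable M : R -> R -> R.
Hypothesis HMcont : forall v rho, 0 <= v <= 1 -> 0 < rho < 1 -> continuity_2d_pt M v rho.
Hypothesis Hdiff : forall v rho, 0 <= v <= 1 -> 0 < rho < 1 -> ex_derive (fun r => M v r) rho.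
Hypothesis HdMcont : forall v rho, 0 <= v <= 1 -> 0 < rho < 1 -> continuity_2d_pt (dM M) v rho.
Hypothesis Hmass : forall rho, 0 <= rho <= 1 -> RInt (fun v => M v rho) 0 1 = rho.

Section Weight.

Variable w : R -> R.
Hypothesis Hw : forall t, continuity_pt w t.

Lemma ex_RInt_moment r : 0 < r < 1 -> ex_RInt (fun v => w v * M v r) 0 1.
Proof.
  intros Hr. apply (ex_RInt_continuous (V := R_CompleteNormedModule)).
  rewrite Rmin_left, Rmax_right by lra. intros z Hz.
  apply (continuous_mult (K := R_AbsRing) w (fun v => M v r)).
  - now apply continuity_pt_filterlim.
  - apply continuity_2d_pt_continuous_l, HMcont; lra.
Qed.

Lemma is_derive_moment r :
  0 < r < 1 -> is_derive (moment M w) r (RInt (fun v => w v * dM M v r) 0 1).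
Proof.
  intros Hr.
  rewrite (RInt_ext _ (fun v => Derive (fun u => w v * M v u) r))
    by (intros; now rewrite Derive_scal).
  apply (is_derive_RInt_param (fun u v => w v * M v u)).
  - apply (filter_imp (fun x => 0 < x < 1)); [|now apply locally_open_unit_interval].
    intros x Hx t Ht. rewrite Rmin_left, Rmax_right in Ht by lra.
    apply ex_derive_scal, Hdiff; lra.
  - intros t Ht. rewrite Rmin_left, Rmax_right in Ht by lra.
    apply (continuity_2d_pt_ext (fun u v => w v * dM M v u)).
    { intros. now rewrite Derive_scal. }
    apply continuity_2d_pt_mult.
    + apply (continuity_1d_2d_pt_comp w (fun _ v => v)).
      * apply Hw.
      * apply continuity_2d_pt_id2.
    + apply (continuity_2d_pt_swap (dM M)), HdMcont; lra.
  - apply (filter_imp (fun x => 0 < x < 1)); [|now apply locally_open_unit_interval].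
    intros x Hx. now apply ex_RInt_moment.
Qed.

Lemma is_RInt_moment r :
  0 < r < 1 -> is_RInt (fun v => w v * M v r) 0 1 (moment M w r).
Proof.
  intros Hr. apply (RInt_correct (V := R_CompleteNormedModule)).
  now apply ex_RInt_moment.
Qed.

End Weight.

Lemma Varv_eq_moments r :
  0 < r < 1 -> Varv M r = moment M (fun v => v ^ 2) r - Qeq M r ^ 2 / r.
Proof.
  intros Hr. unfold Varv, Ueq. set (U := Qeq M r / r).
  assert (Hsq : is_RInt (fun v => v ^ 2 * M v r) 0 1 (moment M (fun v => v ^ 2) r))
    by (apply is_RInt_moment; [intros; reg | exact Hr]).
  assert (Hfirst : is_RInt (fun v => v * M v r) 0 1 (Qeq M r))
    by (apply is_RInt_moment; [intros; reg | exact Hr]).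
  assert (Hzeroth : is_RInt (fun v => 1 * M v r) 0 1 (moment M (fun _ => 1) r))
    by (apply is_RInt_moment; [intros; reg | exact Hr]).
  assert (Hmass_r : moment M (fun _ => 1) r = r).
  { unfold moment.
    rewrite (RInt_ext (V := R_CompleteNormedModule) _ (fun v => M v r))
      by (intros; apply Rmult_1_l).
    apply Hmass; lra. }
  apply is_RInt_unique.
  replace (moment M (fun v => v ^ 2) r - Qeq M r ^ 2 / r)
    with (moment M (fun v => v ^ 2) r - 2 * U * Qeq M r + U ^ 2 * moment M (fun _ => 1) r)
    by (rewrite Hmass_r; unfold U; field; lra).
  apply (is_RInt_ext (V := R_NormedModule)
           (fun v => v ^ 2 * M v r - 2 * U * (v * M v r) + U ^ 2 * (1 * M v r))).
  - intros x _. simpl. ring.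
  - apply (is_RInt_plus (V := R_NormedModule)).
    + apply (is_RInt_minus (V := R_NormedModule)); [exact Hsq |].
      now apply (is_RInt_scal (V := R_NormedModule)).
    + now apply (is_RInt_scal (V := R_NormedModule)).
Qed.

Lemma is_derive_Qeq rho :
  0 < rho < 1 -> is_derive (Qeq M) rho (RInt (fun v => v * dM M v rho) 0 1).
Proof.
  intros Hr. apply (is_derive_moment (fun v => v)); [intros; reg | exact Hr].
Qed.

Lemma is_derive_Varv rho :
  0 < rho < 1 ->
  is_derive (Varv M) rho
    (RInt (fun v => v ^ 2 * dM M v rho) 0 1
     - (2 * RInt (fun v => v * dM M v rho) 0 1 * Qeq M rho * rho - Qeq M rho ^ 2) / rho ^ 2).
Proof.
  intros Hr.
  apply (is_derive_ext_loc (fun r => moment M (fun v => v ^ 2) r - Qeq M r ^ 2 / r)).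
  { apply (filter_imp (fun r => 0 < r < 1)); [|now apply locally_open_unit_interval].
    intros r Hr'. symmetry. now apply Varv_eq_moments. }
  set (Q' := RInt (fun v => v * dM M v rho) 0 1).
  match goal with |- is_derive _ _ (?S' - _) =>
    replace (S' - _) with (minus S' ((INR 2 * Q' * Qeq M rho ^ 1 * rho - Qeq M rho ^ 2 * 1) / rho ^ 2))
      by (unfold minus, plus, opp; simpl; field; lra) end.
  apply (is_derive_minus (K := R_AbsRing) (V := R_NormedModule)).
  - apply is_derive_moment; [intros; reg | exact Hr].
  - apply (is_derive_div (fun r => Qeq M r ^ 2) (fun r => r)); [| | lra].
    + now apply is_derive_pow, is_derive_Qeq.
    + apply (is_derive_id (K := R_AbsRing)).
Qed.

Lemma mu_eq_Derive_Varv rho :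
  0 < rho < 1 -> mu M rho = Derive (Varv M) rho - (Derive (Qeq M) rho - Ueq M rho) ^ 2.
Proof.
  intros Hr. unfold mu, Ueq.
  rewrite (is_derive_unique _ _ _ (is_derive_Qeq rho Hr)),
    (is_derive_unique _ _ _ (is_derive_Varv rho Hr)).
  field. lra.
Qed.

End Moments.

Theorem proposition3p2 (M : R -> R -> R) (rho_t : R)
  (* nonnegative distributions on V = [0,1] *)
  (Hnonneg : forall v rho, 0 <= v <= 1 -> 0 <= rho <= 1 -> 0 <= M v rho)
  (* total mass rho *)
  (Hmass : forall rho, 0 <= rho <= 1 -> RInt (fun v => M v rho) 0 1 = rho)
  (* regularity: M jointly continuous, differentiable in rho with jointly
     continuous partial derivative (so that integrals may be differentiated) *)
  (HMcont : forall v rho, 0 <= v <= 1 -> 0 < rho < 1 -> continuity_2d_pt M v rho)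
  (Hdiff : forall v rho, 0 <= v <= 1 -> 0 < rho < 1 -> ex_derive (fun r => M v r) rho)
  (HdMcont : forall v rho, 0 <= v <= 1 -> 0 < rho < 1 -> continuity_2d_pt (dM M) v rho)
  (* the threshold density *)
  (Hrt : 0 < rho_t < 1)
  (HQ : forall rho, rho_t < rho < 1 ->
          Derive (Qeq M) rho = RInt (fun v => v * dM M v rho) 0 1 /\
          Derive (Qeq M) rho < 0)
  (HVar : forall rho, rho_t < rho < 1 -> Derive (Varv M) rho < 0) :
  forall rho, rho_t < rho < 1 -> mu M rho < 0.
Proof.
  intros rho Hr.
  rewrite (mu_eq_Derive_Varv M HMcont Hdiff HdMcont Hmass rho) by lra.
  pose proof (HVar rho Hr).
  pose proof (pow2_ge_0 (Derive (Qeq M) rho - Ueq M rho)).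
  lra.
Qed.
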